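(* Let $\bar\tau>0$, let $h$ be any delay kernel as in the context, with Laplace transform $H$, and let $\alpha,\beta\in\mathbb{R}$ with $\beta<\alpha-1$. Then the characteristic equation $$\Big(z+\tfrac{1}{\bar\tau}\Big)^4-\alpha\Big(z+\tfrac{1}{\bar\tau}\Big)^2\tfrac{1}{\bar\tau^2}H(z)^2+\tfrac{\beta}{\bar\tau^4}H(z)^4=0$$ has a positive real root; hence the equilibrium is unstable, regardless of the kernel $h$.
   Context: A delay kernel is either a probability density $h:[0,\infty)\to[0,\infty)$ with $\int_0^\infty h=1$ and finite mean $\tau=\int_0^\infty t\,h(t)\,dt>0$, or the Dirac measure $\delta(t-\tau)$, $\tau>0$. Its Laplace transform is $H(z)=\int_0^\infty h(t)e^{-zt}\,dt$ (for the Dirac measure, $H(z)=e^{-z\tau}$), defined for $\operatorname{Re} z\ge 0$. The displayed equation is the characteristic equation of the linearization at an equilibrium of two coupled Wilson–Cowan excitatory/inhibitory pairs with time constant $\bar\tau>0$ and distributed delays; $\alpha,\beta$ are real coefficients determined by coupling weights and sigmoid slopes. The equilibrium is called unstable if some root has positive real part. *)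

From HB Require Import structures.
From mathcomp Require Import all_boot all_order all_algebra.
From mathcomp Require Import all_classical all_reals all_analysis.
Set Implicit Arguments. Unset Strict Implicit. Unset Printing Implicit Defensive.
Import Order.TTheory GRing.Theory Num.Theory.
Import numFieldNormedType.Exports.
Local Open Scope classical_set_scope.
Local Open Scope ring_scope.

(* A delay kernel: either a probability density h on [0,oo), or a Dirac mass at tau. *)
Inductive delay_kernel (R : realType) :=
| Density of (R -> R)
| Dirac of R.

Definition half_line (R : realType) : set R := `[0%R, +oo[%classic.

Definition is_delay_kernel (R : realType) (k : delay_kernel R) : Prop :=
  match k with
  | Density h =>
      measurable_fun ((@half_line R)) h /\
      (forall t, 0 <= t -> 0 <= h t) /\
      (\int[lebesgue_measure]_(t in (@half_line R)) (h t)%:E = 1)%E /\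
      (\int[lebesgue_measure]_(t in (@half_line R)) (t * h t)%:E < +oo)%E /\
      (0 < \int[lebesgue_measure]_(t in (@half_line R)) (t * h t)%:E)%E
  | Dirac tau => 0 < tau
  end.

Definition laplace (R : realType) (k : delay_kernel R) (z : R) : R :=
  match k with
  | Density h =>
      fine (\int[lebesgue_measure]_(t in (@half_line R)) (h t * expR (- (z * t)))%:E)
  | Dirac tau => expR (- (z * tau))
  end.

Definition char_fun (R : realType) (taub alpha beta : R) (k : delay_kernel R) (z : R) : R :=
  let w := z + taub^-1 in
  let H := laplace k z in
  w ^+ 4 - alpha * w ^+ 2 * (taub ^+ 2)^-1 * H ^+ 2 + beta / taub ^+ 4 * H ^+ 4.

(* With s := taub * z + 1 and u := H(z)^2, the characteristic function equals
   (s^4 - alpha s^2 u + beta u^2) / taub^4.  Every kernel has H(0) = 1 and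
   0 <= H <= 1 on [0, +oo), so the quartic is 1 - alpha + beta < 0 at z = 0 and
   positive once s >= |alpha| + |beta| + 2, whatever u.  H is continuous by
   dominated convergence (h itself dominates h(t) e^(-zt)), and the intermediate
   value theorem yields a positive root. *)

From HB Require Import structures.
From mathcomp Require Import all_boot all_order all_algebra.
From mathcomp Require Import all_classical all_reals all_analysis.
From mathcomp Require Import measurable_realfun lebesgue_integral_under.
From mathcomp Require Import ring lra.
Set Implicit Arguments. Unset Strict Implicit. Unset Printing Implicit Defensive.
Import Order.TTheory GRing.Theory Num.Theory.
Import numFieldNormedType.Exports.
Local Open Scope classical_set_scope.
Local Open Scope ring_scope.

Section laplace_transform.
Variable R : realType.
Notation mu := (@lebesgue_measure R).
Notation halfR := (@half_line R).

Lemma half_line_ge0 (t : R) : halfR t -> 0 <= t.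
Proof. by rewrite /half_line /= in_itv /= andbT. Qed.

Lemma measurable_half_line : measurable halfR.
Proof. exact: measurable_itv. Qed.

Lemma continuous_expR_normr_mul (t : R) : continuous (fun z : R => expR (- (`|z| * t))).
Proof.
move=> z; apply: continuous_comp; last exact: continuous_expR.
apply: continuousN; apply: (@continuousM _ _ (fun z : R => `|z|) (fun=> t)).
  exact: norm_continuous.
exact: cst_continuous.
Qed.

Lemma expR_Nmul_ge0_le1 (z t : R) : 0 <= z -> 0 <= t -> 0 <= expR (- (z * t)) <= 1.
Proof. by move=> z0 t0; rewrite expR_ge0 expR_le1 oppr_le0 mulr_ge0. Qed.

Section density.
Variable h : R -> R.
Hypothesis mh : measurable_fun halfR h.
Hypothesis h_ge0 : forall t, 0 <= t -> 0 <= h t.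
Hypothesis h_int1 : (\int[mu]_(t in halfR) (h t)%:E = 1)%E.

Let damped (z t : R) := h t * expR (- (z * t)).

Lemma damped_density_ge0_le (z t : R) : 0 <= z -> 0 <= t -> 0 <= damped z t <= h t.
Proof.
move=> z0 t0; have /andP[e0 e1] := expR_Nmul_ge0_le1 z0 t0.
by rewrite mulr_ge0 ?h_ge0 //= ler_piMr ?h_ge0.
Qed.

Lemma measurable_damped_density (z : R) : measurable_fun halfR (damped z).
Proof.
apply: measurable_funM mh _; apply: measurable_funTS.
by apply: measurableT_comp => //; apply: measurableT_comp => //; exact: measurable_funM.
Qed.

Lemma integrable_density : mu.-integrable halfR (EFin \o h).
Proof.
apply/integrableP; split; first exact/measurable_EFinP.
under eq_integral => t /set_mem /half_line_ge0 t0 do rewrite /= ger0_norm ?h_ge0 //.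
by rewrite h_int1 ltry.
Qed.

Lemma integrable_damped_density (z : R) : 0 <= z ->
  mu.-integrable halfR (EFin \o damped z).
Proof.
move=> z0; apply: le_integrable integrable_density; first exact: measurable_half_line.
  by apply/measurable_EFinP; exact: measurable_damped_density.
move=> t /half_line_ge0 t0; have /andP[d0 dh] := damped_density_ge0_le z0 t0.
by rewrite lee_fin ger0_norm // ger0_norm ?h_ge0.
Qed.

Lemma continuous_laplace_density_normr :
  continuous (fun z : R => laplace (Density h) `|z|).
Proof.
move=> a.
apply: (@continuity_under_integral R _ _ mu (fun z => damped `|z|) halfR
  measurable_half_line (a - 1) (a + 1) (fun z _ => integrable_damped_density (normr_ge0 z))
  _ h integrable_density).
- apply: aeW => t _ z _.
  apply: (@continuousM _ _ (fun=> h t) (fun z : R => expR (- (`|z| * t)))).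
    exact: cst_continuous.
  exact: continuous_expR_normr_mul.
- move=> z _; apply: aeW => t /half_line_ge0 t0.
  have /andP[d0 dh] := damped_density_ge0_le (normr_ge0 z) t0.
  by rewrite ger0_norm.
- by rewrite inE /= in_itv /= gtrBl ltrDl ltr01.
Qed.

Lemma laplace_density0 : laplace (Density h) 0 = 1.
Proof.
rewrite /laplace; under eq_integral do rewrite mul0r oppr0 expR0 mulr1.
by rewrite h_int1.
Qed.

Lemma laplace_density_ge0_le1 (z : R) : 0 <= z -> 0 <= laplace (Density h) z <= 1.
Proof.
move=> z0; rewrite /laplace.
have bnd t : halfR t -> (0 <= (damped z t)%:E)%E /\ ((damped z t)%:E <= (h t)%:E)%E.
  by move=> /half_line_ge0 t0; rewrite !lee_fin; apply/andP/damped_density_ge0_le.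
have I_ge0 : (0 <= \int[mu]_(t in halfR) (damped z t)%:E)%E.
  by apply: integral_ge0 => t /bnd[].
have I_le1 : (\int[mu]_(t in halfR) (damped z t)%:E <= 1)%E.
  rewrite -h_int1; apply: ge0_le_integral => //.
  - exact: measurable_half_line.
  - by move=> t /bnd[].
  - by apply/measurable_EFinP; exact: measurable_damped_density.
  - exact/measurable_EFinP.
  - by move=> t /bnd[].
by move: I_ge0 I_le1; case: (\int[mu]_(t in _) _)%E => //= r; rewrite !lee_fin => -> ->.
Qed.

End density.

(* Evaluating at |z| extends H to a function continuous on the whole line,
   which is what the intermediate value theorem consumes. *)
Lemma continuous_laplace_normr (k : delay_kernel R) : is_delay_kernel k ->
  continuous (fun z : R => laplace k `|z|).
Proof.
case: k => [h [mh [h_ge0 [h_int1 _]]]|tau _]; last exact: continuous_expR_normr_mul.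
exact: continuous_laplace_density_normr.
Qed.

Lemma laplace0 (k : delay_kernel R) : is_delay_kernel k -> laplace k 0 = 1.
Proof.
case: k => [h [_ [_ [h_int1 _]]]|tau _]; first exact: laplace_density0.
by rewrite /= mul0r oppr0 expR0.
Qed.

Lemma laplace_ge0_le1 (k : delay_kernel R) (z : R) : is_delay_kernel k -> 0 <= z ->
  0 <= laplace k z <= 1.
Proof.
case: k => [h [mh [h_ge0 [h_int1 _]]]|tau tau_gt0] z0.
  exact: laplace_density_ge0_le1.
exact/expR_Nmul_ge0_le1/ltW.
Qed.

End laplace_transform.

Definition char_quartic {R : pzRingType} (alpha beta s u : R) : R :=
  s ^+ 4 - alpha * s ^+ 2 * u + beta * u ^+ 2.

Lemma char_quartic_gt0 (R : realFieldType) (alpha beta s u : R) :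
  0 <= u <= 1 -> `|alpha| + `|beta| + 2 <= s -> 0 < char_quartic alpha beta s u.
Proof.
move=> /andP[u_ge0 u_le1] s_ge.
have alpha_u : alpha * u <= `|alpha|.
  apply: le_trans (ler_norm _) _; rewrite normrM (ger0_norm u_ge0).
  exact: ler_piMr.
have beta_u2 : - `|beta| <= beta * u ^+ 2.
  have : `|beta * u ^+ 2| <= `|beta|.
    by rewrite normrM normrX (ger0_norm u_ge0) ler_piMr // exprn_ile1.
  by rewrite ler_norml => /andP[].
have s2_alpha : alpha * s ^+ 2 * u <= s ^+ 2 * `|alpha|.
  by rewrite mulrAC mulrC ler_wpM2l // sqr_ge0.
have a_ge0 := normr_ge0 alpha; have b_ge0 := normr_ge0 beta.
have s2_ge : `|alpha| + `|beta| + 4 <= s ^+ 2 by nra.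
rewrite /char_quartic -[4%N]/(2 + 2)%N exprD; nra.
Qed.

Lemma char_funE (R : realType) (taub alpha beta : R) (k : delay_kernel R) (z : R) :
  taub != 0 ->
  char_fun taub alpha beta k z =
  char_quartic alpha beta (taub * z + 1) (laplace k z ^+ 2) / taub ^+ 4.
Proof. by move=> taub_neq0; rewrite /char_fun /char_quartic; field. Qed.

Lemma cvgXn {K : numFieldType} {T : Type} {F : set_system T} {FF : Filter F}
  (f : T -> K) (a : K) (n : nat) : f @ F --> a -> (fun x => f x ^+ n) @ F --> a ^+ n.
Proof.
move=> fa; elim: n => [|n IH].
  by rewrite expr0; under eq_fun do rewrite expr0; exact: cvg_cst.
by rewrite exprS; under eq_fun do rewrite exprS; exact: cvgM.
Qed.

Lemma continuous_char_fun_normr (R : realType) (taub alpha beta : R) (k : delay_kernel R) :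
  is_delay_kernel k -> continuous (fun z : R => char_fun taub alpha beta k `|z|).
Proof.
move=> /continuous_laplace_normr cH z; rewrite /char_fun.
repeat first [exact: cH | exact: norm_continuous | exact: cvg_cst
  | apply: cvgD | apply: cvgN | apply: cvgM | apply: cvgXn].
Qed.

Lemma continuous_root_gt0 (R : realType) (f : R -> R) (b : R) :
  continuous f -> 0 <= b -> f 0 < 0 -> 0 < f b -> exists2 x, 0 < x & f x = 0.
Proof.
move=> cf b_ge0 f0_lt0 fb_gt0.
have [x] : exists2 x, x \in `[0, b] & f x = 0.
  apply: IVT => //; first exact: continuous_subspaceT.
  by rewrite ge_min le_max (ltW f0_lt0) (ltW fb_gt0) orbT.
rewrite in_itv /= => /andP[x_ge0 _] fx0.
have fx_nlt0 : ~~ (f x < 0) by rewrite fx0 ltxx.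
exists x => //; rewrite lt_neqAle x_ge0 andbT.
by apply: contraNneq fx_nlt0 => <-.
Qed.

Theorem theorem2 (R : realType) (taub alpha beta : R) (k : delay_kernel R) :
  0 < taub -> is_delay_kernel k -> beta < alpha - 1 ->
  exists z : R, 0 < z /\ char_fun taub alpha beta k z = 0.
Proof.
move=> taub_gt0 hk beta_lt.
have taub_neq0 : taub != 0 by rewrite gt_eqF.
have taub4_gt0 : 0 < taub ^+ 4 by rewrite exprn_gt0.
pose f (z : R) := char_fun taub alpha beta k `|z|.
have f0_lt0 : f 0 < 0.
  rewrite /f normr0 char_funE // laplace0 // mulr0 add0r expr1n /char_quartic.
  by rewrite pmulr_llt0 ?invr_gt0 // !expr1n !mulr1; lra.
pose b := (`|alpha| + `|beta| + 1) / taub.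
have b_ge0 : 0 <= b by rewrite divr_ge0 ?ltW // addr_ge0.
have fb_gt0 : 0 < f b.
  rewrite /f ger0_norm // char_funE // divr_gt0 // char_quartic_gt0 //.
    have /andP[H0 H1] := laplace_ge0_le1 hk b_ge0.
    by rewrite sqr_ge0 exprn_ile1.
  by rewrite /b mulrC divfK // -!addrA.
have [x x_gt0 fx0] :=
  continuous_root_gt0 (continuous_char_fun_normr hk) b_ge0 f0_lt0 fb_gt0.
by exists x; split; last by rewrite -(gtr0_norm x_gt0).
Qed.
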